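(* Let $A,B\in \mathbb{R}^{m\times n}$ with $m<n$ and let $1\le p\le\infty$. If $A$ has full row rank and $\|A^\dagger B\|_p<1$, then for any given $b\in\mathbb{R}^m$ the equation $x=A^\dagger(B|x|+b)$ in $x\in\mathbb{R}^n$ has a unique solution, and that solution also satisfies the generalized absolute value equation $Ax-B|x|=b$.
   Context: $A^\dagger$ denotes the Moore–Penrose inverse of $A$. $|x|$ denotes the entrywise absolute value. $\|\cdot\|_p$ on matrices denotes the operator norm induced by the vector $p$-norm. *)

From HB Require Import structures.
From mathcomp Require Import all_boot all_order all_algebra.
From mathcomp Require Import all_classical all_reals.
From mathcomp Require Import exp.
Set Implicit Arguments. Unset Strict Implicit. Unset Printing Implicit Defensive.
Import Order.TTheory GRing.Theory Num.Theory.
Local Open Scope ring_scope.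

Definition is_MP_inverse (R : realType) (m n : nat)
    (A : 'M[R]_(m, n)) (X : 'M[R]_(n, m)) : Prop :=
  [/\ A *m X *m A = A, X *m A *m X = X, (A *m X)^T = A *m X & (X *m A)^T = X *m A].

Definition absv (R : realType) (n : nat) (x : 'cV[R]_n) : 'cV[R]_n :=
  map_mx (fun t => `|t|) x.

Definition vpnorm (R : realType) (p : \bar R) (n : nat) (x : 'cV[R]_n) : R :=
  match p with
  | r%:E => powR (\sum_(i < n) powR `|x i 0| r) r^-1
  | +oo%E => \big[Num.max/0]_(i < n) `|x i 0|
  | -oo%E => 0
  end.

Definition opnorm (R : realType) (p : \bar R) (k n : nat) (M : 'M[R]_(k, n)) : R :=
  sup [set vpnorm p (M *m x) / vpnorm p x | x in [set x : 'cV[R]_n | x != 0]]%classic.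

(* With M = A^+ B, the map F x = A^+ (B |x| + b) satisfies
   F x - F y = M (|x| - |y|); since ||x_i| - |y_i|| <= |x_i - y_i| and the
   p-norm is monotone in the moduli of the entries,
   ||F x - F y||_p <= ||M||_p ||x - y||_p, so F is a contraction and has a
   unique fixed point.  Full row rank and A A^+ A = A make A^+ a right inverse
   of A, so applying A to x = A^+ (B |x| + b) gives A x = B |x| + b. *)

From HB Require Import structures.
From mathcomp Require Import all_boot all_order all_algebra.
From mathcomp Require Import all_classical all_reals all_analysis.
Import Order.TTheory GRing.Theory Num.Theory.
Import numFieldNormedType.Exports.
Set Implicit Arguments. Unset Strict Implicit. Unset Printing Implicit Defensive.
Local Open Scope ring_scope.

Lemma sup_ge0 (R : realType) (E : set R) :
  (forall x, E x -> 0 <= x) -> 0 <= sup E.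
Proof.
move=> E_ge0; have [supE|/sup_out-> //] := pselect (has_sup E).
have [[x Ex] _] := supE.
exact: le_trans (E_ge0 x Ex) (sup_upper_bound supE Ex).
Qed.

Lemma powRK (R : realType) (r a : R) : r != 0 -> 0 <= a -> (a `^ r) `^ r^-1 = a.
Proof. by move=> r_neq0 a_ge0; rewrite -powRrM mulfV ?powRr1. Qed.

Lemma exists_expr_mul_lt1 (R : realType) (q c : R) :
  0 <= q -> q < 1 -> exists k, q ^+ k * c < 1.
Proof.
move=> q_ge0 q_lt1; have [c_le0|c_gt0] := lerP c 0.
  by exists 0%N; rewrite expr0 mul1r (le_lt_trans c_le0).
have : `|q| < 1 by rewrite ger0_norm.
move=> /cvg_expr /cvgrPdist_lt /(_ c^-1); rewrite invr_gt0 => /(_ c_gt0) [N _ HN].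
exists N; have := HN N (leqnn N).
by rewrite sub0r normrN ger0_norm ?exprn_ge0 // -ltr_pdivlMr // div1r.
Qed.

Lemma fixed_point_iter_uniq (T : Type) (F : T -> T) k x :
  x = iter k F x -> (forall y, y = iter k F y -> y = x) -> x = F x.
Proof. by move=> xE uniq; apply/esym/uniq; rewrite -iterSr iterS -xE. Qed.

(* The library gives ['M[R]_(m, n)] a normed-module and a complete structure,
   but not their join, which [banach_fixed_point] needs. *)
Definition cvec (R : realType) n := 'cV[R]_n.
HB.instance Definition _ (R : realType) n := NormedModule.on (cvec R n).
HB.instance Definition _ (R : realType) n :=
  Uniform_isComplete.Build (cvec R n) (@cauchy_cvg 'cV[R]_n).

Lemma mx_contraction_fixed_point (R : realType) n (G : 'cV[R]_n -> 'cV[R]_n) k :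
  0 <= k -> k < 1 -> (forall x y, `|G x - G y| <= k * `|x - y|) ->
  exists! x, x = G x.
Proof.
move=> k_ge0 k_lt1 G_lip.
have ctrG : is_contraction ('totalfun_setT (G : cvec R n -> cvec R n)).
  by exists (NngNum k_ge0); split=> // -[x y] _; exact: G_lip.
have [x _ xE] := banach_fixed_point ctrG closedT (ex_intro _ (0 : cvec R n) I).
exists x; split=> // y yE.
exact: contraction_fixpoint_unique ctrG I I xE yE.
Qed.

Lemma mx_norm_entry (R : realType) m n (M : 'M[R]_(m, n)) i j : `|M i j| <= `|M|.
Proof.
rewrite [leRHS]mx_normrE.
exact: (le_bigmax _ (fun ij : 'I_m * 'I_n => `|M ij.1 ij.2|) (i, j)).
Qed.

Lemma mx_norm_le (R : realType) n (x : 'cV[R]_n) c :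
  0 <= c -> (forall i, `|x i 0| <= c) -> `|x| <= c.
Proof.
move=> c_ge0 xc; rewrite [leLHS]mx_normrE.
by apply: bigmax_le => // -[i j] _; rewrite (ord1 j).
Qed.

Lemma mx_norm_mulmx (R : realType) k n (M : 'M[R]_(k, n)) (z : 'cV[R]_n) :
  `|M *m z| <= n%:R * `|M| * `|z|.
Proof.
apply: mx_norm_le => [|i]; first by rewrite !mulr_ge0.
rewrite mxE; apply: le_trans (ler_norm_sum _ _ _) _.
rewrite -[X in X%:R]card_ord -mulrA mulr_natl -sumr_const.
by apply: ler_sum => j _; rewrite normrM ler_pM ?mx_norm_entry.
Qed.

Section VectorPNorm.
Variables (R : realType) (p : \bar R).
Hypothesis p_ge1 : (1 <= p)%E.

Lemma ereal_ge1_cases : p = +oo%E \/ exists2 r : R, 1 <= r & p = r%:E.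
Proof.
move: p_ge1; case: p => [r|_|//]; last by left.
by rewrite lee_fin => r_ge1; right; exists r.
Qed.

Lemma vpnorm_ge0 n (x : 'cV[R]_n) : 0 <= vpnorm p x.
Proof. by case: p => [r||] /=; rewrite ?powR_ge0 ?bigmax_ge_id. Qed.

Lemma vpnorm0 n : vpnorm p (0 : 'cV[R]_n) = 0.
Proof.
case: ereal_ge1_cases => [->|[r r_ge1 ->]] /=.
  by elim/big_ind: _ => // [x y -> ->|i _]; rewrite ?maxxx // mxE normr0.
have r_neq0 : r != 0 by rewrite gt_eqF // (lt_le_trans ltr01).
rewrite big1 ?powR0 ?invr_eq0 // => i _.
by rewrite mxE normr0 powR0.
Qed.

Lemma vpnorm_coord n (x : 'cV[R]_n) i : `|x i 0| <= vpnorm p x.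
Proof.
case: ereal_ge1_cases => [->|[r r_ge1 ->]] /=.
  exact: (le_bigmax _ (fun i : 'I_n => `|x i 0|)).
have r_gt0 : 0 < r by rewrite (lt_le_trans ltr01).
rewrite -{1}(@powRK _ r _ (lt0r_neq0 r_gt0) (normr_ge0 (x i 0))).
apply: ge0_ler_powR; rewrite ?nnegrE ?invr_ge0 ?powR_ge0 ?(ltW r_gt0) //.
  by rewrite sumr_ge0 // => j _; rewrite powR_ge0.
by rewrite (bigD1 i) //= lerDl sumr_ge0 // => j _; rewrite powR_ge0.
Qed.

Lemma ler_vpnorm n (u v : 'cV[R]_n) :
  (forall i, `|u i 0| <= `|v i 0|) -> vpnorm p u <= vpnorm p v.
Proof.
move=> uv; case: ereal_ge1_cases => [->|[r r_ge1 ->]] /=.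
  by apply: le_bigmax2 => i _; exact: uv.
have r_ge0 : 0 <= r by rewrite (le_trans ler01).
apply: ge0_ler_powR; rewrite ?nnegrE ?invr_ge0 //.
- by rewrite sumr_ge0 // => j _; rewrite powR_ge0.
- by rewrite sumr_ge0 // => j _; rewrite powR_ge0.
by apply: ler_sum => i _; apply: ge0_ler_powR; rewrite ?nnegrE.
Qed.

Lemma vpnorm_absvB n (x y : 'cV[R]_n) :
  vpnorm p (absv x - absv y) <= vpnorm p (x - y).
Proof. by apply: ler_vpnorm => i; rewrite !mxE ler_dist_dist. Qed.

Lemma mx_norm_le_vpnorm n (x : 'cV[R]_n) : `|x| <= vpnorm p x.
Proof. exact: mx_norm_le (vpnorm_ge0 x) (vpnorm_coord x). Qed.

Lemma vpnorm_le_mx_norm n (x : 'cV[R]_n) : vpnorm p x <= n%:R * `|x|.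
Proof.
case: n x => [|n] x; first by rewrite flatmx0 vpnorm0 mul0r.
have x_le := mx_norm_entry x ^~ 0; have x_ge0 := normr_ge0 x.
have le_nx : `|x| <= n.+1%:R * `|x| by rewrite ler_peMl // ler1n.
case: ereal_ge1_cases => [->|[r r_ge1 ->]] /=.
  by apply: bigmax_le => [|i _]; rewrite ?mulr_ge0 // (le_trans (x_le i)).
have r_gt0 : 0 < r by rewrite (lt_le_trans ltr01).
apply: (@le_trans _ _ ((`|x| `^ r *+ n.+1) `^ r^-1)).
  apply: ge0_ler_powR; rewrite ?nnegrE ?invr_ge0 ?mulrn_wge0 ?powR_ge0 ?(ltW r_gt0) //.
    by rewrite sumr_ge0 // => j _; rewrite powR_ge0.
  rewrite -[X in _ *+ X]card_ord -sumr_const.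
  by apply: ler_sum => i _; apply: ge0_ler_powR; rewrite ?nnegrE ?(ltW r_gt0).
rewrite -mulr_natl powRM ?powR_ge0 // powRK ?gt_eqF //.
by rewrite ler_wpM2r // ler1_powR // ?ler1n // invf_le1.
Qed.

Lemma vpnorm_gt0 n (x : 'cV[R]_n) : x != 0 -> 0 < vpnorm p x.
Proof.
move=> x_neq0; apply: lt_le_trans (mx_norm_le_vpnorm x).
by rewrite normr_gt0.
Qed.

Lemma opnorm_ge0 k n (M : 'M[R]_(k, n)) : 0 <= opnorm p M.
Proof. by apply: sup_ge0 => _ [x _ <-]; rewrite divr_ge0 ?vpnorm_ge0. Qed.

Lemma vpnorm_mulmx_le k n (M : 'M[R]_(k, n)) (z : 'cV[R]_n) :
  vpnorm p (M *m z) <= opnorm p M * vpnorm p z.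
Proof.
have [->|z_neq0] := eqVneq z 0; first by rewrite mulmx0 !vpnorm0 mulr0.
rewrite -ler_pdivrMr ?vpnorm_gt0 //; apply: ub_le_sup; last by exists z.
exists (k%:R * (n%:R * `|M|)) => _ [x /= x_neq0 <-].
rewrite ler_pdivrMr ?vpnorm_gt0 //.
apply: le_trans (vpnorm_le_mx_norm _) _; rewrite -!mulrA ler_wpM2l //.
apply: le_trans (mx_norm_mulmx M x) _.
by rewrite -mulrA !ler_wpM2l // mx_norm_le_vpnorm.
Qed.

(* The p-norm is never shown to satisfy the triangle inequality, only to be
   equivalent to the sup norm; this makes a high iterate of F a contraction
   for the sup norm, to which Banach's theorem applies. *)
Lemma vpnorm_contraction_fixed_point n (F : 'cV[R]_n -> 'cV[R]_n) q :
  0 <= q -> q < 1 -> (forall x y, vpnorm p (F x - F y) <= q * vpnorm p (x - y)) ->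
  exists! x, x = F x.
Proof.
move=> q_ge0 q_lt1 F_lip.
have iter_lip k x y :
    vpnorm p (iter k F x - iter k F y) <= q ^+ k * vpnorm p (x - y).
  elim: k => [|k IHk]; first by rewrite expr0 mul1r.
  rewrite !iterS exprS -mulrA; apply: le_trans (F_lip _ _) _.
  by rewrite ler_wpM2l.
have [k qk_lt1] := exists_expr_mul_lt1 n%:R q_ge0 q_lt1.
have iter_sup_lip x y :
    `|iter k F x - iter k F y| <= q ^+ k * n%:R * `|x - y|.
  apply: le_trans (mx_norm_le_vpnorm _) _; apply: le_trans (iter_lip k x y) _.
  by rewrite -mulrA ler_wpM2l ?exprn_ge0 ?vpnorm_le_mx_norm.
have [|x [xE uniq]] := mx_contraction_fixed_point _ qk_lt1 iter_sup_lip.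
  by rewrite mulr_ge0 ?exprn_ge0.
exists x; split=> [|y yE].
  by apply: fixed_point_iter_uniq xE _ => y /uniq.
by apply: uniq; rewrite iter_fix.
Qed.

End VectorPNorm.

Lemma row_free_mulmx_ginv (F : fieldType) m n (A : 'M[F]_(m, n)) X :
  row_free A -> A *m X *m A = A -> A *m X = 1%:M.
Proof.
move=> /row_freeP [Ar AAr] AXA.
by rewrite -[A *m X]mulmx1 -AAr mulmxA AXA.
Qed.

Theorem corollary3p1 (R : realType) (m n : nat) (A B : 'M[R]_(m, n))
    (Adag : 'M[R]_(n, m)) (p : \bar R) :
  (m < n)%N ->
  (1 <= p)%E ->
  is_MP_inverse A Adag ->
  \rank A = m ->
  opnorm p (Adag *m B) < 1 ->
  forall b : 'cV[R]_m,
    (exists! x : 'cV[R]_n, x = Adag *m (B *m absv x + b)) /\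
    (forall x : 'cV[R]_n, x = Adag *m (B *m absv x + b) ->
       A *m x - B *m absv x = b).
Proof.
move=> _ p_ge1 [AXA _ _ _] rankA opnorm_lt1 b.
split.
  apply: (@vpnorm_contraction_fixed_point _ _ p_ge1 _
    (fun x => Adag *m (B *m absv x + b)) _ (opnorm_ge0 p _) opnorm_lt1) => x y.
  rewrite -mulmxBr opprD addrACA subrr addr0 -mulmxBr mulmxA.
  apply: le_trans (vpnorm_mulmx_le p_ge1 _ _) _.
  by rewrite ler_wpM2l ?opnorm_ge0 ?vpnorm_absvB.
have AAdag : A *m Adag = 1%:M by apply: row_free_mulmx_ginv; rewrite // /row_free rankA.
by move=> x {1}->; rewrite mulmxA AAdag mul1mx addrAC subrr add0r.
Qed.
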